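(* Let $\Sigma=(X,\mathcal{S},\phi)$ be a forward complete dynamical system whose transition map $\phi$ is $\mathcal{S}$-uniformly continuous. Assume $\Sigma$ is USGES, and let $r\mapsto M(r)>0$, $r\mapsto\lambda(r)>0$ be functions such that $\|\phi(t,x,\sigma)\|\le M(r)e^{-\lambda(r)t}\|x\|$ for all $r>0$, $t\ge0$, $x\in B_X(0,r)$, $\sigma\in\mathcal{S}$. Then for every $r>0$ there exist $\underline{c}_r,\overline{c}_r>0$ and a continuous functional $V_r:X\to\mathbb{R}_+$ such that $$\underline{c}_r\|x\|\le V_r(x)\le\overline{c}_r\|x\|\quad\forall x\in B_X(0,r),$$ $$\overline{D}_\sigma V_r(x)\le-\|x\|\quad\forall x\in B_X(0,r),\ \forall\sigma\in\mathcal{S},$$ and $V_r=V_R$ on $X$ for every $R>0$ such that $\lambda(r)=\lambda(R)$ and $M(r)=M(R)$. Moreover, if $\phi$ is $\mathcal{S}$-uniformly Lipschitz continuous (respectively, $\mathcal{S}$-uniformly Lipschitz continuous on bounded sets), then $V_r$ can be taken Lipschitz continuous (respectively, Lipschitz continuous on bounded sets).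
   Context: $(X,\|\cdot\|)$ is a Banach space and $B_X(x,r)$ is the closed ball of center $x$ and radius $r$. Let $\mathcal{Q}$ be a nonempty set and $\mathcal{S}$ a set of functions $\sigma:\mathbb{R}_+\to\mathcal{Q}$ closed by time-shift (for $\sigma\in\mathcal{S}$, $\tau\ge0$, $\mathbb{T}_\tau\sigma:s\mapsto\sigma(\tau+s)$ is in $\mathcal{S}$) and by concatenation (for $\sigma_1,\sigma_2\in\mathcal{S}$, $\tau>0$, the function equal to $\sigma_1$ on $[0,\tau]$ and with $\sigma(\tau+t)=\sigma_2(t)$ for $t>0$ is in $\mathcal{S}$). A triple $\Sigma=(X,\mathcal{S},\phi)$ with $\phi:\mathbb{R}_+\times X\times\mathcal{S}\to X$ is a forward complete dynamical system if: $\phi(0,x,\sigma)=x$; $\phi(t,x,\tilde\sigma)=\phi(t,x,\sigma)$ whenever $\tilde\sigma=\sigma$ on $[0,t]$; $t\mapsto\phi(t,x,\sigma)$ is continuous; $\phi(\tau,\phi(t,x,\sigma),\mathbb{T}_t\sigma)=\phi(t+\tau,x,\sigma)$ for all $t,\tau\ge0$. $\Sigma$ is USGES if for every $r>0$ there exist $M(r),\lambda(r)>0$ with $\|\phi(t,x,\sigma)\|\le M(r)e^{-\lambda(r)t}\|x\|$ for all $t\ge0$, $x\in B_X(0,r)$, $\sigma\in\mathcal{S}$. The upper Dini derivative is $\overline{D}_\sigma V(x)=\limsup_{h\downarrow0}\frac1h\big(V(\phi(h,x,\sigma))-V(x)\big)$. $\phi$ is $\mathcal{S}$-uniformly continuous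 if for every $\bar t>0$, $x\in X$, $\varepsilon>0$ there is $\eta>0$ with $\|\phi(t,x,\sigma)-\phi(t,y,\sigma)\|\le\varepsilon$ for all $t\in[0,\bar t]$, $y\in B_X(x,\eta)$, $\sigma\in\mathcal{S}$. $\phi$ is $\mathcal{S}$-uniformly Lipschitz continuous if for every $\bar t>0$ there is $l(\bar t)>0$ with $\|\phi(t,x,\sigma)-\phi(t,y,\sigma)\|\le l(\bar t)\|x-y\|$ for all $t\in[0,\bar t]$, $x,y\in X$, $\sigma\in\mathcal{S}$; it is $\mathcal{S}$-uniformly Lipschitz continuous on bounded sets if for every $\bar t,R>0$ there is $l(\bar t,R)>0$ with the same inequality for all $t\in[0,\bar t]$, $x,y\in B_X(0,R)$, $\sigma\in\mathcal{S}$. *)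

From HB Require Import structures.
From mathcomp Require Import all_boot all_order all_algebra.
From mathcomp Require Import all_classical all_reals all_analysis.
Set Implicit Arguments. Unset Strict Implicit. Unset Printing Implicit Defensive.
Import Order.TTheory GRing.Theory Num.Theory.
Import numFieldNormedType.Exports.
Local Open Scope classical_set_scope.
Local Open Scope ring_scope.

(* Input signals sigma : R_+ -> Q are represented as functions R -> Q whose
   values at negative times are irrelevant (all notions below only look at
   nonnegative times). *)

Definition is_shift (R : realType) (Q : Type) (sigma : R -> Q) (tau : R)
  (sigma' : R -> Q) : Prop :=
  forall s, 0 <= s -> sigma' s = sigma (tau + s).

Definition is_concat (R : realType) (Q : Type) (sigma1 sigma2 : R -> Q) (tau : R)
  (sigma : R -> Q) : Prop :=
  (forall t, 0 <= t -> t <= tau -> sigma t = sigma1 t) /\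
  (forall t, 0 < t -> sigma (tau + t) = sigma2 t).

Definition shift_concat_closed (R : realType) (Q : Type) (S : set (R -> Q)) : Prop :=
  (forall sigma tau, S sigma -> 0 <= tau ->
     exists sigma', S sigma' /\ is_shift sigma tau sigma') /\
  (forall sigma1 sigma2 tau, S sigma1 -> S sigma2 -> 0 < tau ->
     exists sigma, S sigma /\ is_concat sigma1 sigma2 tau sigma).

Definition forward_complete (R : realType) (X : normedModType R) (Q : Type)
  (S : set (R -> Q)) (phi : R -> X -> (R -> Q) -> X) : Prop :=
  [/\ (forall x sigma, S sigma -> phi 0 x sigma = x),
      (forall t x sigma sigma', S sigma -> S sigma' -> 0 <= t ->
         (forall s, 0 <= s -> s <= t -> sigma' s = sigma s) ->
         phi t x sigma' = phi t x sigma),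
      (forall x sigma, S sigma ->
         {within `[0, +oo[, continuous (fun t => phi t x sigma)}) &
      (forall t tau x sigma sigma', S sigma -> S sigma' -> 0 <= t -> 0 <= tau ->
         is_shift sigma t sigma' ->
         phi tau (phi t x sigma) sigma' = phi (t + tau) x sigma)].

Definition cball0 (R : realType) (X : normedModType R) (r : R) : set X :=
  [set x | `|x| <= r].

Definition S_unif_cont (R : realType) (X : normedModType R) (Q : Type)
  (S : set (R -> Q)) (phi : R -> X -> (R -> Q) -> X) : Prop :=
  forall (tbar : R) (x : X) (eps : R), 0 < tbar -> 0 < eps ->
    exists eta : R, 0 < eta /\
      forall t y sigma, 0 <= t -> t <= tbar -> `|x - y| <= eta -> S sigma ->
        `|phi t x sigma - phi t y sigma| <= eps.

Definition S_unif_lipschitz (R : realType) (X : normedModType R) (Q : Type)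
  (S : set (R -> Q)) (phi : R -> X -> (R -> Q) -> X) : Prop :=
  forall tbar : R, 0 < tbar ->
    exists l : R, 0 < l /\
      forall t x y sigma, 0 <= t -> t <= tbar -> S sigma ->
        `|phi t x sigma - phi t y sigma| <= l * `|x - y|.

Definition S_unif_lipschitz_bounded (R : realType) (X : normedModType R) (Q : Type)
  (S : set (R -> Q)) (phi : R -> X -> (R -> Q) -> X) : Prop :=
  forall tbar Rb : R, 0 < tbar -> 0 < Rb ->
    exists l : R, 0 < l /\
      forall t x y sigma, 0 <= t -> t <= tbar -> S sigma ->
        `|x| <= Rb -> `|y| <= Rb ->
        `|phi t x sigma - phi t y sigma| <= l * `|x - y|.

Definition upper_dini (R : realType) (X : normedModType R) (Q : Type)
  (phi : R -> X -> (R -> Q) -> X) (V : X -> R) (sigma : R -> Q) (x : X) : \bar R :=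
  limf_esup (fun h : R => ((V (phi h x sigma) - V x) / h)%:E) (0 : R)^'+.

Definition lipschitz_functional (R : realType) (X : normedModType R) (V : X -> R) : Prop :=
  exists L : R, forall x y : X, `|V x - V y| <= L * `|x - y|.

Definition lipschitz_bounded_functional (R : realType) (X : normedModType R)
  (V : X -> R) : Prop :=
  forall Rb : R, 0 < Rb ->
    exists L : R, forall x y : X, `|x| <= Rb -> `|y| <= Rb ->
      `|V x - V y| <= L * `|x - y|.

Definition lyapunov_family (R : realType) (X : normedModType R) (Q : Type)
  (S : set (R -> Q)) (phi : R -> X -> (R -> Q) -> X) (M lam : R -> R)
  (V : R -> X -> R) : Prop :=
  forall r : R, 0 < r ->
    [/\ exists cl ch : R, [/\ 0 < cl, 0 < ch &
          forall x : X, `|x| <= r -> cl * `|x| <= V r x /\ V r x <= ch * `|x| ],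
        continuous (V r),
        (forall x : X, 0 <= V r x),
        (forall (x : X) sigma, S sigma -> `|x| <= r ->
           (upper_dini phi (V r) sigma x <= (- `|x|)%:E)%E) &
        (forall Rr : R, 0 < Rr -> lam r = lam Rr -> M r = M Rr -> V r = V Rr)].

From HB Require Import structures.
From mathcomp Require Import all_boot all_order all_algebra.
From mathcomp Require Import all_classical all_reals all_analysis.
From mathcomp Require Import ring lra.
Import Order.TTheory GRing.Theory Num.Theory.
Import numFieldNormedType.Exports.
Local Open Scope classical_set_scope.
Local Open Scope ring_scope.
Set Implicit Arguments. Unset Strict Implicit. Unset Printing Implicit Defensive.

(* For mu := lambda(r)/2 and the horizon T := 2 M(r)/lambda(r) put
   W(x) := sup { e^(mu t) |phi(t,x,sigma)| : sigma in S, 0 <= t <= T }.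
   By the choice of T, every orbit starting in B(0,r) has e^(mu t)|phi(t,x,sigma)|
   <= |x| <= W(x) for t >= T, so W dominates the weighted orbit at all times.
   Since the tail of a trajectory is again a trajectory (S is closed under shift
   and concatenation), W(phi(h,x,sigma)) <= e^(-mu h) W(x), which yields the
   Dini bound for V_r := (4/lambda(r)) W.  The estimates |x| <= W(x) <=
   (1 + M(r))|x| come from the decay hypothesis, and continuity (resp. Lipschitz
   continuity) of V_r is inherited from that of phi on the compact window [0,T]. *)

Lemma limf_esup_le (T : choiceType) (Y : filteredType T) (R : realType)
  (f : Y -> \bar R) (F : set_system Y) (c : \bar R) :
  (\forall y \near F, (f y <= c)%E) -> (limf_esup f F <= c)%E.
Proof.
move=> Fc; rewrite limf_esupE; apply: ge_ereal_inf.
by exists (ereal_sup (f @` [set y | (f y <= c)%E])); [exists [set y | (f y <= c)%E]|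
  apply: ge_ereal_sup => _ [y fyc <-]].
Qed.

Lemma expRN_le_half (R : realType) (u : R) : 0 <= u <= 1 -> expR (- u) <= 1 - u / 2.
Proof.
case/andP=> u0 u1.
have E0 : 0 < expR (- u) := expR_gt0 _.
have : expR (- u) * (1 + u) <= 1.
  have inv : expR (- u) * expR u = 1 by rewrite -expRD addNr expR0.
  by rewrite -[X in _ <= X]inv ler_wpM2l ?expR_ge1Dx ?ltW.
nra.
Qed.

Lemma mul_expRN_le1 (R : realType) (m : R) : m * expR (- m) <= 1.
Proof.
rewrite expRN ler_pdivrMr ?expR_gt0 // mul1r.
by have := expR_ge1Dx m; lra.
Qed.

Section Lyapunov.
Variables (R : realType) (X : normedModType R) (Q : Type).
Variables (S : set (R -> Q)) (phi : R -> X -> (R -> Q) -> X).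
Hypothesis closedS : shift_concat_closed S.
Hypothesis fcS : forward_complete S phi.
Hypothesis ucS : S_unif_cont S phi.

(* Concatenation only prescribes an input on ]0, +oo[ after the junction, so we
   need that phi ignores the value of the input at time 0.  Shifting by a small
   eps > 0 removes that value; continuity at t = 0 and uniform continuity on
   [0, t] let eps go to 0. *)
Lemma flow_ext_pos t y s1 s2 : S s1 -> S s2 -> 0 <= t ->
  (forall s, 0 < s -> s1 s = s2 s) -> phi t y s1 = phi t y s2.
Proof.
move=> Ss1 Ss2 t0 e12; have [shiftS _] := closedS.
have [phi0 causal cont semigroup] := fcS.
have [->|tn0] := eqVneq t 0; first by rewrite !phi0.
have tpos : 0 < t by rewrite lt_neqAle eq_sym tn0.
apply/eqP; rewrite -subr_eq0 -normr_le0; apply/ler_addgt0Pr => e e0; rewrite add0r.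
have [eta [eta0 Heta]] := ucS y tpos (divr_gt0 e0 (ltr0Sn _ 1)).
have close s : S s -> \forall eps \near 0^'+, `|y - phi eps y s| <= eta.
  move=> Ss; have := ((continuous_within_itvcyP _ _).1 (cont y s Ss)).2.
  by rewrite phi0 // => /cvgrPdist_le; apply.
near (0 : R)^'+ => eps.
have eps0 : 0 < eps by near: eps; exact: nbhs_right_gt.
have epst : eps < t by near: eps; exact: nbhs_right_lt.
have y1 : `|y - phi eps y s1| <= eta by near: eps; exact: close.
have y2 : `|y - phi eps y s2| <= eta by near: eps; exact: close.
have [k [Sk shk]] := shiftS s1 eps Ss1 (ltW eps0).
have teps0 : 0 <= t - eps by rewrite subr_ge0 ltW.
have restart s : S s -> (forall u, 0 < u -> s u = s1 u) ->
    phi t y s = phi (t - eps) (phi eps y s) k.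
  move=> Ss es; have [ks [Sks shks]] := shiftS s eps Ss (ltW eps0).
  rewrite -[in LHS](subrKC eps t) -(semigroup _ _ _ _ _ Ss Sks (ltW eps0) teps0 shks).
  apply: causal => // u u0 _; rewrite shk // shks // es //; lra.
have e21 u : 0 < u -> s2 u = s1 u by move=> /e12 ->.
rewrite (restart s1) // (restart s2) //.
have tle : t - eps <= t by rewrite gerBl ltW.
rewrite [e]splitr; apply: le_trans (ler_distD (phi (t - eps) y k) _ _) _.
by apply: lerD; [rewrite distrC|]; apply: Heta.
Unshelve. all: by end_near.
Qed.

Lemma flow_concat h t x sigma sigma' : S sigma -> S sigma' -> 0 < h -> 0 <= t ->
  exists2 rho, S rho & phi t (phi h x sigma) sigma' = phi (h + t) x rho.
Proof.
move=> Ss Ss' h0 t0; have [shiftS concatS] := closedS.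
have [_ causal _ semigroup] := fcS.
have [rho [Srho [rho_pre rho_post]]] := concatS sigma sigma' h Ss Ss' h0.
have [rho' [Srho' shrho]] := shiftS rho h Srho (ltW h0).
exists rho => //; rewrite -(semigroup _ _ _ _ _ Srho Srho' (ltW h0) t0 shrho).
have -> : phi h x rho = phi h x sigma.
  by apply: (causal _ _ _ _ Ss Srho (ltW h0)) => s s0 sh; rewrite rho_pre.
by apply: flow_ext_pos => // u u0; rewrite shrho ?ltW // rho_post.
Qed.

(* The term |x| keeps the set nonempty when S is empty; otherwise it is the
   t = 0 member. *)
Definition weighted_orbit (mu T : R) (x : X) : set R :=
  [set e | e = `|x| \/ exists sigma t,
     [/\ S sigma, 0 <= t, t <= T & e = expR (mu * t) * `|phi t x sigma|]].

Definition orbit_sup (mu T : R) (x : X) : R := sup (weighted_orbit mu T x).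

Variables (M lam : R -> R).
Hypothesis M_lam_gt0 : forall r, 0 < r -> 0 < M r /\ 0 < lam r.
Hypothesis decay : forall r t x sigma, 0 < r -> 0 <= t -> `|x| <= r -> S sigma ->
  `|phi t x sigma| <= M r * expR (- lam r * t) * `|x|.

Lemma norm_flow_le t x sigma : 0 <= t -> S sigma ->
  `|phi t x sigma| <= M (`|x| + 1) * `|x|.
Proof.
move=> t0 Ss; have r0 : 0 < `|x| + 1 by rewrite ltr_wpDl.
have [M0 lam0] := M_lam_gt0 r0.
have xr : `|x| <= `|x| + 1 by rewrite lerDl.
apply: le_trans (decay r0 t0 xr Ss) _.
rewrite -mulrA ler_pM2l // ler_piMl // expR_le1 mulNr oppr_le0.
by rewrite mulr_ge0 // ltW.
Qed.

Lemma weighted_flow_le r mu t x sigma : 0 < r -> 0 <= t -> `|x| <= r -> S sigma ->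
  expR (mu * t) * `|phi t x sigma| <= M r * expR (- (lam r - mu) * t) * `|x|.
Proof.
move=> r0 t0 xr Ss.
suff -> : M r * expR (- (lam r - mu) * t) * `|x| =
    expR (mu * t) * (M r * expR (- lam r * t) * `|x|).
  by rewrite ler_wpM2l ?expR_ge0 ?decay.
have -> : - (lam r - mu) * t = mu * t + - lam r * t by ring.
by rewrite expRD; ring.
Qed.

Lemma has_sup_weighted_orbit mu T x : 0 <= mu -> has_sup (weighted_orbit mu T x).
Proof.
move=> mu0; split; first by exists `|x|; left.
have [M0 _] := M_lam_gt0 (ltr_wpDl (normr_ge0 x) (@ltr01 R)).
exists (`|x| + expR (mu * T) * (M (`|x| + 1) * `|x|)).
have ub0 : 0 <= expR (mu * T) * (M (`|x| + 1) * `|x|).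
  by rewrite mulr_ge0 ?expR_ge0 // mulr_ge0 // ltW.
move=> _ [->|[sigma [t [Ss t0 tT ->]]]]; first by rewrite lerDl.
apply: ler_wpDl => //; apply: ler_pM; rewrite ?expR_ge0 //.
  by rewrite ler_expR ler_wpM2l.
exact: norm_flow_le.
Qed.

Lemma norm_le_orbit_sup mu T x : 0 <= mu -> `|x| <= orbit_sup mu T x.
Proof. by move=> mu0; apply: sup_upper_bound; [exact: has_sup_weighted_orbit|left]. Qed.

Lemma weighted_flow_le_orbit_sup_window mu T t x sigma :
  0 <= mu -> S sigma -> 0 <= t -> t <= T ->
  expR (mu * t) * `|phi t x sigma| <= orbit_sup mu T x.
Proof.
move=> mu0 Ss t0 tT; apply: sup_upper_bound; first exact: has_sup_weighted_orbit.
by right; exists sigma, t.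
Qed.

Lemma orbit_sup_le r mu T x : 0 < r -> 0 <= mu <= lam r -> `|x| <= r ->
  orbit_sup mu T x <= (1 + M r) * `|x|.
Proof.
move=> r0 /andP[mu0 mu_lam] xr; have [M0 _] := M_lam_gt0 r0.
apply: ge_sup; first by exists `|x|; left.
move=> _ [->|[sigma [t [Ss t0 tT ->]]]]; first by rewrite ler_peMl // lerDl ltW.
apply: le_trans (weighted_flow_le mu r0 t0 xr Ss) _.
rewrite mulrDl mul1r; apply: ler_wpDl => //.
rewrite ler_wpM2r //; apply: ler_piMr; first exact: ltW.
by rewrite expR_le1 mulNr oppr_le0 mulr_ge0 // subr_ge0.
Qed.

(* The horizon condition M e^(-(lam - mu) T) <= 1 says that the weighted orbit
   is back below |x| at time T, hence stays there. *)
Lemma weighted_flow_le_orbit_sup r mu T t x sigma : 0 < r -> 0 <= mu <= lam r ->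
  M r * expR (- (lam r - mu) * T) <= 1 -> 0 <= t -> `|x| <= r -> S sigma ->
  expR (mu * t) * `|phi t x sigma| <= orbit_sup mu T x.
Proof.
move=> r0 /andP[mu0 mu_lam] horizon t0 xr Ss; have [M0 _] := M_lam_gt0 r0.
have [tT|Tt] := leP t T; first exact: weighted_flow_le_orbit_sup_window.
apply: le_trans (weighted_flow_le mu r0 t0 xr Ss) (le_trans _ (norm_le_orbit_sup T x mu0)).
rewrite ler_piMl // (le_trans _ horizon) // ler_pM2l // ler_expR.
have : 0 <= (lam r - mu) * (t - T) by rewrite mulr_ge0 // subr_ge0 // ltW.
nra.
Qed.

Lemma orbit_sup_flow_le r mu T h x sigma : 0 < r -> 0 <= mu <= lam r ->
  M r * expR (- (lam r - mu) * T) <= 1 -> 0 < h -> `|x| <= r -> S sigma ->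
  orbit_sup mu T (phi h x sigma) <= expR (- (mu * h)) * orbit_sup mu T x.
Proof.
move=> r0 mu_lam horizon h0 xr Ss.
have shift_weight t a : expR (mu * t) * a = expR (- (mu * h)) * (expR (mu * (h + t)) * a).
  by rewrite mulrA -expRD; congr (expR _ * _); ring.
apply: ge_sup; first by exists `|phi h x sigma|; left.
move=> _ [->|[sigma' [t [Ss' t0 tT ->]]]].
  rewrite -[X in X <= _]mul1r -(expR0 R) -(mulr0 mu) shift_weight addr0.
  by rewrite ler_pM2l ?expR_gt0 // (weighted_flow_le_orbit_sup r0) // ltW.
have [rho Srho ->] := flow_concat x Ss Ss' h0 t0.
rewrite shift_weight ler_pM2l ?expR_gt0 // (weighted_flow_le_orbit_sup r0) //.
by rewrite addr_ge0 // ltW.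
Qed.

Lemma orbit_sup_le_shift mu T x y d : 0 <= mu -> 0 <= d ->
  (forall sigma t, S sigma -> 0 <= t -> t <= T -> `|phi t x sigma - phi t y sigma| <= d) ->
  orbit_sup mu T x <= orbit_sup mu T y + (`|x - y| + expR (mu * T) * d).
Proof.
move=> mu0 d0 xy; apply: ge_sup; first by exists `|x|; left.
have ed0 : 0 <= expR (mu * T) * d by rewrite mulr_ge0 ?expR_ge0.
move=> _ [->|[sigma [t [Ss t0 tT ->]]]].
  have := norm_le_orbit_sup T y mu0; have := ler_distD y x 0.
  by rewrite !subr0 (distrC x y); lra.
have := weighted_flow_le_orbit_sup_window y mu0 Ss t0 tT.
have : `|phi t x sigma| <= `|phi t y sigma| + d.
  have := ler_distD (phi t y sigma) (phi t x sigma) 0; rewrite !subr0.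
  by have := xy sigma t Ss t0 tT; lra.
move=> /(ler_wpM2l (expR_ge0 (mu * t))); rewrite mulrDr.
have : expR (mu * t) * d <= expR (mu * T) * d by rewrite ler_wpM2r // ler_expR ler_wpM2l.
by have := normr_ge0 (x - y); lra.
Qed.

Lemma orbit_sup_dist mu T x y d : 0 <= mu -> 0 <= d ->
  (forall sigma t, S sigma -> 0 <= t -> t <= T -> `|phi t x sigma - phi t y sigma| <= d) ->
  `|orbit_sup mu T x - orbit_sup mu T y| <= `|x - y| + expR (mu * T) * d.
Proof.
move=> mu0 d0 xy; have yx sigma t : S sigma -> 0 <= t -> t <= T ->
    `|phi t y sigma - phi t x sigma| <= d by rewrite distrC; apply: xy.
have := orbit_sup_le_shift mu0 d0 xy; have := orbit_sup_le_shift mu0 d0 yx.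
by rewrite ler_distl (distrC y x); lra.
Qed.

(* mu = l/2 and T = 2m/l give (l - mu) T = m, so the horizon condition is
   m e^(-m) <= 1; the factor 4/l turns the contraction rate e^(-mu h) of
   orbit_sup into the Dini bound -|x|. *)
Definition lyap_fun (m l : R) (x : X) : R := 4 / l * orbit_sup (l / 2) (2 * m / l) x.

Lemma lyap_fun_dist m l x y d : 0 < l -> 0 <= d ->
  (forall sigma t, S sigma -> 0 <= t -> t <= 2 * m / l ->
     `|phi t x sigma - phi t y sigma| <= d) ->
  `|lyap_fun m l x - lyap_fun m l y| <= 4 / l * (`|x - y| + expR m * d).
Proof.
move=> l0 d0 xy; have c0 : 0 <= 4 / l by rewrite divr_ge0 ?ltW.
rewrite /lyap_fun -mulrBr normrM ger0_norm // ler_wpM2l //.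
have -> : expR m = expR (l / 2 * (2 * m / l)) by congr expR; field; rewrite gt_eqF.
by apply: orbit_sup_dist => //; rewrite divr_ge0 // ltW.
Qed.

Lemma lyap_fun_lipschitz m l k x y : 0 < l -> 0 <= k ->
  (forall sigma t, S sigma -> 0 <= t -> t <= 2 * m / l ->
     `|phi t x sigma - phi t y sigma| <= k * `|x - y|) ->
  `|lyap_fun m l x - lyap_fun m l y| <= 4 / l * (1 + expR m * k) * `|x - y|.
Proof.
move=> l0 k0 xy.
have -> : 4 / l * (1 + expR m * k) * `|x - y| = 4 / l * (`|x - y| + expR m * (k * `|x - y|)).
  by ring.
by apply: lyap_fun_dist; rewrite ?mulr_ge0.
Qed.

Lemma lyap_fun_continuous m l : 0 < m -> 0 < l -> continuous (lyap_fun m l).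
Proof.
move=> m0 l0 x; apply/cvgrPdist_le => eps eps0.
have c0 : 0 < 4 / l by rewrite divr_gt0.
have T0 : 0 < 2 * m / l by rewrite divr_gt0 // mulr_gt0.
have e0 : 0 < eps / 2 / (4 / l) by rewrite !divr_gt0.
have [eta [eta0 Heta]] := ucS x T0 (divr_gt0 e0 (expR_gt0 m)).
near=> y.
have xy_eta : `|x - y| <= eta by near: y; exact: cvgr_dist_le.
have xy_eps : `|x - y| <= eps / 2 / (4 / l) by near: y; exact: cvgr_dist_le.
apply: le_trans (lyap_fun_dist l0 (ltW (divr_gt0 e0 (expR_gt0 m))) _) _.
  by move=> sigma t Ss t0 tT; apply: Heta.
rewrite mulrDr (mulrC (expR m)) divfK ?gt_eqF ?expR_gt0 //.
have -> : 4 / l * (eps / 2 / (4 / l)) = eps / 2 by field; rewrite gt_eqF.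
have : 4 / l * `|x - y| <= eps / 2 by rewrite mulrC -ler_pdivlMr.
lra.
Unshelve. all: by end_near.
Qed.

Lemma lyap_fun_dini r x sigma : 0 < r -> `|x| <= r -> S sigma ->
  (upper_dini phi (lyap_fun (M r) (lam r)) sigma x <= (- `|x|)%:E)%E.
Proof.
move=> r0 xr Ss; have [M0 lam0] := M_lam_gt0 r0.
set l := lam r in lam0 *; set mu := l / 2; set T := 2 * M r / l.
have mu0 : 0 < mu by rewrite divr_gt0.
have horizon : M r * expR (- (l - mu) * T) <= 1.
  have -> : - (l - mu) * T = - M r by rewrite /mu /T; field; rewrite gt_eqF.
  exact: mul_expRN_le1.
apply: limf_esup_le; near=> h.
have h0 : 0 < h by near: h; exact: nbhs_right_gt.
have muh1 : mu * h <= 1.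
  rewrite mulrC -ler_pdivlMr //; apply: ltW; near: h; apply: nbhs_right_lt.
  by rewrite divr_gt0.
rewrite lee_fin ler_pdivrMr // /lyap_fun -/l -/mu -/T.
set W := orbit_sup mu T x.
have xW : `|x| <= W := norm_le_orbit_sup T x (ltW mu0).
have mu_lam : 0 <= mu <= l by apply/andP; split; [exact: ltW | rewrite /mu; lra].
have Eb : expR (- (mu * h)) <= 1 - mu * h / 2.
  by apply: expRN_le_half; rewrite muh1 andbT mulr_ge0 // ltW.
have : 4 / l * orbit_sup mu T (phi h x sigma) <= 4 / l * ((1 - mu * h / 2) * W).
  rewrite ler_pM2l ?divr_gt0 //.
  apply: le_trans (orbit_sup_flow_le r0 mu_lam horizon h0 xr Ss) _.
  by rewrite ler_wpM2r // (le_trans _ xW).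
have -> : 4 / l * ((1 - mu * h / 2) * W) = 4 / l * W - h * W.
  by rewrite /mu; field; rewrite gt_eqF.
have : h * `|x| <= h * W by rewrite ler_pM2l.
lra.
Unshelve. all: by end_near.
Qed.

Lemma lyapunov_family_lyap_fun :
  lyapunov_family S phi M lam (fun r => lyap_fun (M r) (lam r)).
Proof.
move=> r r0; have [M0 lam0] := M_lam_gt0 r0.
have c0 : 0 < 4 / lam r by rewrite divr_gt0.
have mu0 : 0 <= lam r / 2 by rewrite divr_ge0 ?ltW.
split.
- exists (4 / lam r), (4 / lam r * (1 + M r)); split.
  + exact: c0.
  + by rewrite mulr_gt0 // ltr_wpDr // ltW.
  + move=> x xr; split; rewrite /lyap_fun ?ler_pM2l //.
      exact: norm_le_orbit_sup.
    rewrite -[_ * _ * `|x|]mulrA ler_pM2l //; apply: orbit_sup_le => //.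
    by rewrite mu0 /=; lra.
- exact: lyap_fun_continuous.
- move=> x; apply: mulr_ge0; first exact: ltW.
  exact: le_trans (normr_ge0 x) (norm_le_orbit_sup _ x mu0).
- by move=> x sigma Ss xr; apply: lyap_fun_dini.
- by move=> Rr _ -> ->.
Qed.

End Lyapunov.

Theorem theorem5 (R : realType) (X : completeNormedModType R) (Q : Type)
  (S : set (R -> Q)) (phi : R -> X -> (R -> Q) -> X) (M lam : R -> R) :
  inhabited Q ->
  shift_concat_closed S ->
  forward_complete S phi ->
  S_unif_cont S phi ->
  (forall r : R, 0 < r -> 0 < M r /\ 0 < lam r) ->
  (forall (r t : R) (x : X) (sigma : R -> Q), 0 < r -> 0 <= t -> `|x| <= r ->
     S sigma -> `|phi t x sigma| <= M r * expR (- lam r * t) * `|x|) ->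
  [/\ (exists V : R -> X -> R, lyapunov_family S phi M lam V),
      (S_unif_lipschitz S phi ->
         exists V : R -> X -> R, lyapunov_family S phi M lam V /\
           forall r : R, 0 < r -> lipschitz_functional (V r)) &
      (S_unif_lipschitz_bounded S phi ->
         exists V : R -> X -> R, lyapunov_family S phi M lam V /\
           forall r : R, 0 < r -> lipschitz_bounded_functional (V r))].
Proof.
move=> _ closedS fcS ucS M_lam_gt0 decay.
have family := lyapunov_family_lyap_fun closedS fcS ucS M_lam_gt0 decay.
have horizon_gt0 r : 0 < r -> 0 < 2 * M r / lam r.
  by move=> /M_lam_gt0[M0 lam0]; rewrite divr_gt0 // mulr_gt0.
split; first by eexists; exact: family.
- move=> lipS; eexists; split; first exact: family.
  move=> r r0; have [k [k0 lip_k]] := lipS _ (horizon_gt0 r r0).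
  exists (4 / lam r * (1 + expR (M r) * k)) => x y.
  apply: (lyap_fun_lipschitz M_lam_gt0 decay) => [||sigma t Ss t0 tT].
  + exact: (M_lam_gt0 r r0).2.
  + exact: ltW.
  + exact: lip_k.
- move=> lipS; eexists; split; first exact: family.
  move=> r r0 b b0; have [k [k0 lip_k]] := lipS _ _ (horizon_gt0 r r0) b0.
  exists (4 / lam r * (1 + expR (M r) * k)) => x y xb yb.
  apply: (lyap_fun_lipschitz M_lam_gt0 decay) => [||sigma t Ss t0 tT].
  + exact: (M_lam_gt0 r r0).2.
  + exact: ltW.
  + exact: lip_k.
Qed.
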